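(* Let $Q$ be a finite loop and $S$ a subloop of $Q$. For $x\in Q$ let $O_x(Q,S)$ denote the orbit of $x$ under the permutation group $\langle R_s : s\in S\rangle$ acting naturally on $Q$, where $R_s:Q\to Q$, $y\mapsto ys$. (i) If $|O_x(Q,S)|$ is a multiple of $|S|$ for every $x\in Q$, then $|S|$ divides $|Q|$. (ii) If $O_x(Q,S)$ can be written as a disjoint union of left cosets of $S$ for every $x\in Q$, then $Q$ has a left coset partition modulo $S$, i.e., there is a subset of the left cosets $\{yS: y\in Q\}$ that partitions $Q$.
   Context: For $y\in Q$, $yS=\{ys:s\in S\}$ is the left coset of $S$ with representative $y$. *)

From mathcomp Require Import all_boot.
Set Implicit Arguments. Unset Strict Implicit. Unset Printing Implicit Defensive.

Definition is_loop (T : finType) (mul : T -> T -> T) (e : T) : Prop :=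
  [/\ forall x, mul e x = x, forall x, mul x e = x,
      forall a, bijective (mul a) & forall a, bijective (fun y => mul y a)].

Definition is_subloop (T : finType) (mul : T -> T -> T) (e : T) (S : {set T}) : Prop :=
  [/\ e \in S,
      forall a b, a \in S -> b \in S -> mul a b \in S,
      forall a b x, a \in S -> b \in S -> mul a x = b -> x \in S &
      forall a b y, a \in S -> b \in S -> mul y a = b -> y \in S].

Definition Rtrans (T : finType) (mul : T -> T -> T) (s : T) : T -> T := fun y => mul y s.

Definition Rstep (T : finType) (mul : T -> T -> T) (S : {set T}) : rel T :=
  fun a b => [exists s in S, (Rtrans mul s a == b) || (Rtrans mul s b == a)].

(* Orbit of x under the permutation group < R_s : s in S >: all points reached
   from x by finite words in the generators R_s and their inverses. *)
Definition orbitQS (T : finType) (mul : T -> T -> T) (S : {set T}) (x : T) : {set T} :=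
  [set y | connect (Rstep mul S) x y].

Definition lcoset (T : finType) (mul : T -> T -> T) (y : T) (S : {set T}) : {set T} :=
  [set mul y s | s in S].

Definition lcoset_family (T : finType) (mul : T -> T -> T) (S : {set T})
  (P : {set {set T}}) : Prop :=
  forall C, C \in P -> exists y, C = lcoset mul y S.

From mathcomp Require Import all_boot.

Set Implicit Arguments.
Unset Strict Implicit.
Unset Printing Implicit Defensive.

(* The orbits O_x(Q,S) partition Q.  Part (i) follows by summing the orbit
   sizes, part (ii) by gluing together the coset partitions of the individual
   orbits.  Neither part uses the loop or subloop axioms. *)

Section PartitionFacts.
Variable T : finType.
Implicit Types (D : {set T}) (P : {set {set T}}).

Lemma dvdn_card_partition d P D :
  partition P D -> {in P, forall A : {set T}, d %| #|A|} -> d %| #|D|.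
Proof. by move=> partP dvdP; rewrite (card_partition partP) dvdn_sum. Qed.

Lemma partition_refine P D (Q : {set T} -> {set {set T}}) :
  partition P D -> {in P, forall A : {set T}, partition (Q A) A} ->
  partition (\bigcup_(A in P) Q A) D.
Proof.
move=> partP partQ; apply/and3P; split.
- rewrite -(cover_partition partP) /cover; apply/eqP/setP => x.
  apply/bigcupP/bigcupP => [[B /bigcupP[A PA QAB] Bx] | [A PA Ax]].
    by exists A => //; rewrite -(cover_partition (partQ A PA)); apply/bigcupP; exists B.
  have /bigcupP[B QAB Bx] : x \in cover (Q A) by rewrite (cover_partition (partQ A PA)).
  by exists B => //; apply/bigcupP; exists A.
- apply/trivIsetP => B C /bigcupP[A PA QAB] /bigcupP[A' PA' QA'C] neBC.
  have [eqAA' | neAA'] := eqVneq A A'.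
    move: QA'C; rewrite -eqAA' => QAC.
    exact: (trivIsetP (partition_trivIset (partQ A PA))).
  have disjAA' := trivIsetP (partition_trivIset partP) A A' PA PA' neAA'.
  apply: disjointWl (partitionS (partQ A PA) QAB) _.
  exact: disjointWr (partitionS (partQ A' PA') QA'C) disjAA'.
- by apply/bigcupP => -[A PA]; rewrite (partition0 (partQ A PA)).
Qed.

Lemma connect_classes_partition (e : rel T) :
  connect_sym e -> partition [set [set y | connect e x y] | x : T] [set: T].
Proof.
move=> sym_e.
have partE : partition (equivalence_partition (connect e) [set: T]) [set: T].
  apply: equivalence_partitionP => x y z _ _ _ /=.
  by split=> [|cxy]; [exact: connect0 | exact: (same_connect sym_e cxy z)].
congr partition: partE; apply/setP => A.
by apply/imsetP/imsetP => -[x _ ->]; exists x => //; apply/setP => y; rewrite !inE.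
Qed.

End PartitionFacts.

Definition orbitsQS (T : finType) (mul : T -> T -> T) (S : {set T}) :
  {set {set T}} := [set orbitQS mul S x | x : T].

Lemma Rstep_sym (T : finType) (mul : T -> T -> T) (S : {set T}) :
  symmetric (Rstep mul S).
Proof.
by move=> a b; apply/existsP/existsP => -[s /andP[sS ab]]; exists s; rewrite sS orbC.
Qed.

Lemma orbitsQS_partition (T : finType) (mul : T -> T -> T) (S : {set T}) :
  partition (orbitsQS mul S) [set: T].
Proof. exact/connect_classes_partition/sym_connect_sym/Rstep_sym. Qed.

Theorem lemma5p3 (T : finType) (mul : T -> T -> T) (e : T) (S : {set T}) :
  is_loop mul e -> is_subloop mul e S ->
  ((forall x : T, #|S| %| #|orbitQS mul S x|) -> #|S| %| #|T|) /\
  ((forall x : T, exists P : {set {set T}},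
       lcoset_family mul S P /\ partition P (orbitQS mul S x)) ->
   exists P : {set {set T}}, lcoset_family mul S P /\ partition P [set: T]).
Proof.
move=> _ _; have partO := orbitsQS_partition mul S; split.
  move=> dvdO; rewrite -cardsT (dvdn_card_partition partO) //.
  by move=> _ /imsetP[x _ ->].
move=> cosetsO.
have /fin_all_exists[Q QP] : forall A : {set T}, exists Q : {set {set T}},
    A \in orbitsQS mul S -> lcoset_family mul S Q /\ partition Q A.
  move=> A; have [/imsetP[x _ ->] | _] := boolP (A \in orbitsQS mul S).
    by have [Q QP] := cosetsO x; exists Q.
  by exists set0.
exists (\bigcup_(A in orbitsQS mul S) Q A); split.
  by move=> C /bigcupP[A OA QAC]; case: (QP A OA) => /(_ C QAC).
by apply: partition_refine partO _ => A OA; case: (QP A OA).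
Qed.
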